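(* Let $(V,E)$ be a finite graph and $p\in[0,1]$. Let $(\eta_t,\sigma_t)_{t\ge0}$ be a continuous-time Markov jump process on $\{0,1\}^E\times\{-1,1\}^V$ with the following rates: (i) if $\eta'=\eta$ and there is $x\in V$ with $\sigma'=\sigma^x$ and $\eta(e)=0$ for all $e\in E_x$, the rate from $(\eta,\sigma)$ to $(\eta',\sigma')$ is $1$; (ii) if $\sigma'=\sigma$ and there is $e\in E$ with $\eta'=\eta^e$, the rate is $p\mathbf 1_{\eta(e)=0}\delta_\sigma(e)+(1-p)\mathbf 1_{\eta(e)=1}$; (iii) all other off-diagonal rates are $0$. Suppose $(\eta_0,\sigma_0)$ is distributed according to $IP$. Then for every $e\in E$, every $\eta\in\{0,1\}^E$ and every $s\ge0$, $$\lim_{t\to0}\frac1t\,\mathbb P(\eta_{t+s}=\eta^e\mid\eta_s=\eta)=(1-p)\mathbf 1_{\eta(e)=1}+p\,\mathbf 1_{\eta(e)=0,\ \gamma_\eta(e)=1}+\frac p2\,\mathbf 1_{\eta(e)=0,\ \gamma_\eta(e)=0}.$$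
   Context: Edge configurations $\eta\in\{0,1\}^E$ (1 = open), spin configurations $\sigma\in\{-1,1\}^V$. For $e=\langle x,y\rangle$, $\delta_\sigma(e)=\mathbf 1_{\sigma(x)=\sigma(y)}$. $IP(\eta,\sigma)=\frac1Z\prod_{e\in E}\big(p\mathbf 1_{\eta(e)=1}\delta_\sigma(e)+(1-p)\mathbf 1_{\eta(e)=0}\big)$ with $Z$ the normalizing constant. $E_x$ is the set of edges with endvertex $x$; $\sigma^x$ is $\sigma$ with the spin at $x$ flipped; $\eta^e$ is $\eta$ with the value at edge $e$ changed. For $e=\langle x,y\rangle$, $\gamma_\eta(e)=1$ if $x$ and $y$ are connected by a path of open edges of $\eta$ not using $e$, and $\gamma_\eta(e)=0$ otherwise. *)

From HB Require Import structures.
From mathcomp Require Import all_boot all_order all_algebra.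
From mathcomp Require Import all_classical all_reals all_analysis.
From mathcomp Require Import Rstruct Rstruct_topology.
From Stdlib Require Import Rdefinitions.

Set Implicit Arguments.
Unset Strict Implicit.
Unset Printing Implicit Defensive.

Import Order.TTheory GRing.Theory Num.Theory.
Local Open Scope ring_scope.

Section Model.
Variables (V E : finType) (src tgt : E -> V).

(* Edge configurations eta : E -> bool (true = open = 1);
   spin configurations sg : V -> bool (true encodes spin +1, false spin -1). *)
Definition econf := {ffun E -> bool}.
Definition sconf := {ffun V -> bool}.
Definition state := (econf * sconf)%type.

Definition delta (sg : sconf) (e : E) : bool := sg (src e) == sg (tgt e).

Definition incident (x : V) (e : E) : bool := (src e == x) || (tgt e == x).

Definition flipV (sg : sconf) (x : V) : sconf :=
  [ffun y => if y == x then ~~ sg y else sg y].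
Definition flipE (eta : econf) (e : E) : econf :=
  [ffun f => if f == e then ~~ eta f else eta f].

Definition open_adj (eta : econf) (e : E) : rel V :=
  fun x y => [exists f, [&& f != e, eta f &
      ((src f == x) && (tgt f == y)) || ((src f == y) && (tgt f == x))]].
Definition gamma (eta : econf) (e : E) : bool :=
  connect (open_adj eta e) (src e) (tgt e).

Definition IPweight (p : R) (a : state) : R :=
  \prod_(e : E) (if a.1 e then p * (delta a.2 e)%:R else 1 - p).
Definition IPZ (p : R) : R := \sum_(a : state) IPweight p a.
Definition IP (p : R) (a : state) : R := IPweight p a / IPZ p.

Definition rate (p : R) (a b : state) : R :=
  \sum_(x : V) ((a.1 == b.1) && (b.2 == flipV a.2 x)
                 && [forall e, incident x e ==> ~~ a.1 e])%:R
  + \sum_(e : E) ((a.2 == b.2) && (b.1 == flipE a.1 e))%:R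
       * (p * ((~~ a.1 e) && delta a.2 e)%:R + (1 - p) * (a.1 e)%:R).

Definition gen (p : R) (a b : state) : R :=
  if a == b then - \sum_(c | c != a) rate p a c else rate p a b.

Definition mmul (A B : state -> state -> R) (a b : state) : R :=
  \sum_(c : state) A a c * B c b.
Definition mid (a b : state) : R := (a == b)%:R.
Fixpoint mpow (A : state -> state -> R) (n : nat) : state -> state -> R :=
  if n is n'.+1 then mmul A (mpow A n') else mid.

(* transition semigroup P_t = exp(t Q) = sum_n t^n Q^n / n! *)
Definition trans (p t : R) (a b : state) : R :=
  limn (fun N : nat => \sum_(n < N) (t ^+ n / (n`!)%:R) * mpow (gen p) n a b).

Definition law_at (p s : R) (b : state) : R :=
  \sum_(a : state) IP p a * trans p s a b.

Definition prob_eta (p s : R) (eta : econf) : R :=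
  \sum_(sg : sconf) law_at p s (eta, sg).

(* P(eta_{t+s} = eta', eta_s = eta), by the Markov property *)
Definition prob_eta2 (p s t : R) (eta eta' : econf) : R :=
  \sum_(sg : sconf) \sum_(sg' : sconf) law_at p s (eta, sg) * trans p t (eta, sg) (eta', sg').

Definition cond_prob (p s t : R) (eta eta' : econf) : R :=
  prob_eta2 p s t eta eta' / prob_eta p s eta.

End Model.

(* IP is reversible for the dynamics: a spin flip at a vertex without open
   edges leaves the IP-weight unchanged, and each edge flip satisfies detailed
   balance.  Hence IP is stationary and the law at time s is IP.  Since
   P_t = I + tQ + O(t^2), the limit is the IP(. | eta)-average of the rate of
   flipping e: (1 - p) if e is open, and p times the conditional probability
   that the spins agree across e if it is closed.  If gamma_eta(e) = 1 the
   spins at the ends of e agree IP-almost surely; otherwise flipping every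
   spin of the open cluster of one endpoint preserves the weight and toggles
   the agreement across e, so that probability is 1/2. *)

From HB Require Import structures.
From mathcomp Require Import all_boot all_order all_algebra.
From mathcomp Require Import all_classical all_reals all_analysis.
From mathcomp Require Import Rstruct Rstruct_topology.
From Stdlib Require Import Rdefinitions.
From mathcomp Require Import ring lra.
Set Implicit Arguments.
Unset Strict Implicit.
Unset Printing Implicit Defensive.

Import Order.TTheory GRing.Theory Num.Theory.
Local Open Scope ring_scope.
Local Open Scope classical_set_scope.

Lemma cvg_at_right0_of_linear_bound (f : R -> R) (L d C : R) : 0 < d ->
  (forall t, 0 < t -> t <= d -> `|f t - L| <= C * t) -> f @ 0^'+ --> L.
Proof.
move=> d_gt0 fC; apply/(@cvgrPdist_le _ R^o) => eps eps_gt0.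
have C1_gt0 : 0 < `|C| + 1 by rewrite ltr_pwDr.
near=> t.
have t_gt0 : 0 < t by near: t; exact: nbhs_right_gt.
have t_le_d : t <= d by near: t; exact: nbhs_right_le.
have t_small : t <= eps / (`|C| + 1) by near: t; apply: nbhs_right_le; exact: divr_gt0.
rewrite distrC; apply: le_trans (fC t t_gt0 t_le_d) _.
move: t_small; rewrite ler_pdivlMr // => t_small.
have := ler_norm C; nra.
Unshelve. all: by end_near.
Qed.

Lemma sum_expr_le2 (x : R) M : 0 <= x -> x <= 1 / 2 -> \sum_(i < M) x ^+ i <= 2.
Proof.
move=> x_ge0 x_le; have := subrX1 x M.
have : 0 <= \sum_(i < M) x ^+ i by rewrite sumr_ge0 // => i _; rewrite exprn_ge0.
have := exprn_ge0 M x_ge0; nra.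
Qed.

Lemma exp_coeff_le_expr (x : R) n : 0 <= x -> exp_coeff x n <= x ^+ n.
Proof.
move=> x_ge0; rewrite /exp_coeff /= ler_pdivrMr ?ltr0n ?fact_gt0 //.
by rewrite ler_peMr ?exprn_ge0 // ler1n fact_gt0.
Qed.

Lemma cvg_sumr (I T : Type) (F : set_system T) (r : seq I) (f : I -> T -> R) (l : I -> R) :
  Filter F -> (forall i, f i @ F --> l i) ->
  (fun x => \sum_(i <- r) f i x) @ F --> \sum_(i <- r) l i.
Proof. by move=> FF f_cvg; apply: (@cvg_big R^o _ +%R 0 xpredT add_continuous). Qed.

Section MatrixExponential.
Variables (V E : finType) (A : state V E -> state V E -> R).
Local Notation st := (state V E).

Definition mbound := 1 + \sum_(a : st) \sum_(c : st) `|A a c|.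

Lemma mbound_ge1 : 1 <= mbound.
Proof. by rewrite lerDl; do 2![apply: sumr_ge0 => ? _]. Qed.

Lemma mbound_ge0 : 0 <= mbound.
Proof. exact: le_trans ler01 mbound_ge1. Qed.

Lemma rowsum_le_mbound a : \sum_(c : st) `|A a c| <= mbound.
Proof.
rewrite /mbound [X in _ <= 1 + X](bigD1 a) //= addrCA lerDl addr_ge0 //.
by do 2![apply: sumr_ge0 => ? _].
Qed.

Lemma mpow_norm_le n a b : `|mpow A n a b| <= mbound ^+ n.
Proof.
elim: n a b => [|n IHn] a b /=.
  by rewrite /mid expr0; case: (a == b); rewrite ?normr1 ?normr0.
rewrite /mmul exprS mulrC; apply: le_trans (ler_norm_sum _ _ _) _.
apply: (@le_trans _ _ (\sum_c `|A a c| * mbound ^+ n)).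
  by apply: ler_sum => c _; rewrite normrM ler_wpM2l.
by rewrite -mulr_suml mulrC ler_wpM2r ?exprn_ge0 ?mbound_ge0 ?rowsum_le_mbound.
Qed.

Definition expm_partial (t : R) (a b : st) (N : nat) :=
  \sum_(n < N) (t ^+ n / n`!%:R) * mpow A n a b.

Lemma expm_term_norm_le t n a b :
  `|t ^+ n / n`!%:R * mpow A n a b| <= exp_coeff (`|t| * mbound) n.
Proof.
rewrite /exp_coeff /= normrM normrM normfV normr_nat normrX exprMn mulrAC.
by rewrite ler_wpM2r ?invr_ge0 // ler_wpM2l ?exprn_ge0 ?mpow_norm_le.
Qed.

Lemma expm_partial_cvg t a b : cvgn (expm_partial t a b).
Proof.
pose u n := t ^+ n / n`!%:R * mpow A n a b.
have -> : expm_partial t a b = series u.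
  by apply/funext => N; rewrite /series /= big_mkord.
apply: (@normed_cvg _ R^o).
apply: (series_le_cvg _ _ (fun n => expm_term_norm_le t n a b)).
- by move=> n; exact: normr_ge0.
- by move=> n; apply: exp_coeff_ge0; rewrite mulr_ge0 ?mbound_ge0.
- exact: is_cvg_series_exp_coeff.
Qed.

Lemma mmul_mid a b : mmul A (@mid V E) a b = A a b.
Proof.
rewrite /mmul (bigD1 b) //= /mid eqxx mulr1 big1 ?addr0 // => c /negbTE.
by rewrite eq_sym => ->; rewrite mulr0.
Qed.

Lemma expm_partial_first_order t a b (N : nat) :
  0 <= t -> t * mbound <= 1 / 2 -> (2 <= N)%nat ->
  `|expm_partial t a b N - mid a b - t * A a b| <= 2 * (t * mbound) ^+ 2.
Proof.
move=> t_ge0 t_small; case: N => [|[|M]] // _.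
have tK_ge0 : 0 <= t * mbound by rewrite mulr_ge0 ?mbound_ge0.
rewrite /expm_partial !big_ord_recl !lift0 /= mmul_mid fact0 expr0 expr1 !divr1 mul1r.
set S := \sum_(i < M) _.
have -> : mid a b + (t * A a b + S) - mid a b - t * A a b = S by ring.
apply: le_trans (ler_norm_sum _ _ _) _.
apply: (@le_trans _ _ (\sum_(i < M) (t * mbound) ^+ 2 * (t * mbound) ^+ i)).
  apply: ler_sum => i _; rewrite -exprD.
  have := expm_term_norm_le t i.+2 a b; rewrite [`|t|]ger0_norm // => /le_trans; apply.
  exact: exp_coeff_le_expr.
by rewrite -mulr_sumr mulrC ler_wpM2r ?exprn_ge0 ?sum_expr_le2.
Qed.

Lemma expm_first_order t a b : 0 <= t -> t * mbound <= 1 / 2 ->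
  `|limn (expm_partial t a b) - mid a b - t * A a b| <= 2 * (t * mbound) ^+ 2.
Proof.
move=> t_ge0 t_small; set c := mid a b + t * A a b.
have dist_cvg : (fun N : nat => `|expm_partial t a b N - c|) @ \oo -->
    `|limn (expm_partial t a b) - c|.
  exact: cvg_norm (cvgB (V := R^o) (@expm_partial_cvg t a b) (cvg_cst c)).
rewrite -addrA -opprD -/c -(cvg_lim _ dist_cvg); last exact: Rhausdorff.
apply: limr_le; first by apply/cvg_ex; eexists; exact: dist_cvg.
near=> N; rewrite /c opprD addrA expm_partial_first_order //.
by near: N; exists 2%nat.
Unshelve. all: by end_near.
Qed.

Lemma expm_rate a b :
  (fun t => (limn (expm_partial t a b) - mid a b) / t) @ 0^'+ --> A a b.
Proof.
have K_gt0 : 0 < mbound by apply: lt_le_trans mbound_ge1.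
have d_gt0 : 0 < 1 / (2 * mbound) by rewrite divr_gt0 ?mulr_gt0.
pose C := 2 * mbound ^+ 2.
apply: (@cvg_at_right0_of_linear_bound _ _ _ C d_gt0) => t t_gt0 t_le.
have t_small : t * mbound <= 1 / 2.
  by move: t_le; rewrite ler_pdivlMr ?mulr_gt0 //; nra.
have t_neq0 : t != 0 by rewrite gt_eqF.
have -> : (limn (expm_partial t a b) - mid a b) / t - A a b
    = (limn (expm_partial t a b) - mid a b - t * A a b) / t by field.
rewrite normrM normfV (gtr0_norm t_gt0) ler_pdivrMr //.
apply: le_trans (@expm_first_order t a b (ltW t_gt0) t_small) _.
by rewrite /C exprMn; nra.
Qed.

Section Stationary.
Variable pi : st -> R.
Hypothesis pi_stationary : forall b, \sum_a pi a * A a b = 0.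

Lemma mpowS_stationary n b : \sum_a pi a * mpow A n.+1 a b = 0.
Proof.
rewrite /= /mmul; under eq_bigr do rewrite mulr_sumr.
rewrite exchange_big big1 //= => c _.
under eq_bigr do rewrite mulrA.
by rewrite -mulr_suml pi_stationary mul0r.
Qed.

Lemma expm_stationary t b : \sum_a pi a * limn (expm_partial t a b) = pi b.
Proof.
have sum_cvg : (fun N => \sum_a pi a * expm_partial t a b N) @ \oo -->
    \sum_a pi a * limn (expm_partial t a b).
  apply: cvg_sumr => a; exact: cvgMl_tmp (@expm_partial_cvg t a b).
apply: (cvg_unique _ sum_cvg); first exact: Rhausdorff.
apply: cvg_near_cst; near=> N.
have [M ->] : exists M, N = M.+1 by exists N.-1; rewrite prednK //; near: N; exists 1%nat.
rewrite /expm_partial; under eq_bigr do rewrite mulr_sumr.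
rewrite exchange_big big_ord_recl /= [X in _ + X]big1 => [|n _]; last first.
  by under eq_bigr do rewrite mulrCA; rewrite -mulr_sumr mpowS_stationary mulr0.
under eq_bigr do rewrite mulrCA.
rewrite -mulr_sumr expr0 fact0 divr1 mul1r addr0 (bigD1 b) //= /mid eqxx mulr1.
by rewrite big1 ?addr0 // => a /negbTE ->; rewrite mulr0.
Unshelve. all: by end_near.
Qed.

End Stationary.

End MatrixExponential.

Section Flips.
Variables (V E : finType).

Lemma flipVK (sg : sconf V) x : flipV (flipV sg x) x = sg.
Proof. by apply/ffunP => y; rewrite !ffunE; case: (y == x); rewrite ?negbK. Qed.

Lemma flipEK (eta : econf E) f : flipE (flipE eta f) f = eta.
Proof. by apply/ffunP => g; rewrite !ffunE; case: (g == f); rewrite ?negbK. Qed.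

Lemma flipE_id (eta : econf E) f : flipE eta f f = ~~ eta f.
Proof. by rewrite ffunE eqxx. Qed.

Lemma flipE_neq_self (eta : econf E) f : eta != flipE eta f.
Proof.
by apply/eqP => /(congr1 (fun eta' : econf E => eta' f)); rewrite flipE_id; case: (eta f).
Qed.

Lemma flipE_neq (eta : econf E) f g : g != f -> flipE eta f g = eta g.
Proof. by rewrite ffunE => /negbTE ->. Qed.

Lemma eq_flipE (eta : econf E) e f : (flipE eta e == flipE eta f) = (e == f).
Proof.
apply/eqP/idP => [flip_eq|/eqP -> //]; apply: contraT => e_neq_f.
have := congr1 (fun eta' : econf E => eta' e) flip_eq.
by rewrite /= flipE_id flipE_neq //; case: (eta e).
Qed.

End Flips.

Section Reversibility.
Variables (V E : finType) (src tgt : E -> V) (p : R).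
Local Notation st := (state V E).
Local Notation weight := (IPweight src tgt p).

Definition spin_move (a b : st) (x : V) : bool :=
  (a.1 == b.1) && (b.2 == flipV a.2 x) && [forall f, incident src tgt x f ==> ~~ a.1 f].

Definition edge_move (a b : st) (f : E) : bool :=
  (a.2 == b.2) && (b.1 == flipE a.1 f).

Definition edge_rate (a : st) (f : E) :=
  p * ((~~ a.1 f) && delta src tgt a.2 f)%:R + (1 - p) * (a.1 f)%:R.

Lemma rateE a b : rate src tgt p a b =
  \sum_x (spin_move a b x)%:R + \sum_f (edge_move a b f)%:R * edge_rate a f.
Proof. by []. Qed.

Lemma spin_move_sym a b x : spin_move a b x -> spin_move b a x.
Proof.
case: a b => [eta sg] [eta' sg']; rewrite /spin_move /=.
by case/andP=> /andP[/eqP <- /eqP ->] closed_x; rewrite flipVK !eqxx.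
Qed.

Lemma edge_move_sym a b f : edge_move a b f -> edge_move b a f.
Proof.
case: a b => [eta sg] [eta' sg']; rewrite /edge_move /=.
by case/andP=> /eqP <- /eqP ->; rewrite flipEK !eqxx.
Qed.

Lemma weight_spin_move a b x : spin_move a b x -> weight a = weight b.
Proof.
case: a b => [eta sg] [eta' sg']; rewrite /spin_move /=.
case/andP=> /andP[/eqP <- /eqP ->] /forallP closed_x.
apply: eq_bigr => f _ /=; case eta_f: (eta f) => //.
move: (closed_x f); rewrite eta_f implybF negb_or => /andP[src_x tgt_x].
by rewrite /delta !ffunE (negbTE src_x) (negbTE tgt_x).
Qed.

Lemma weight_edge_move a b f : edge_move a b f ->
  weight a * edge_rate a f = weight b * edge_rate b f.
Proof.
case: a b => [eta sg] [eta' sg']; rewrite /edge_move /=.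
case/andP=> /eqP <- /eqP ->.
rewrite /IPweight (bigD1 f) //= [in RHS](bigD1 f) //= /edge_rate /= !flipE_id.
under [X in _ = _ * X * _]eq_bigr => g g_neq_f do rewrite flipE_neq //.
by case: (eta f) => /=; rewrite ?mulr0n ?mulr1n; ring.
Qed.

Lemma weight_rate_sym a b : weight a * rate src tgt p a b = weight b * rate src tgt p b a.
Proof.
rewrite !rateE !mulrDr !mulr_sumr; congr (_ + _); apply: eq_bigr => i _.
  have -> : spin_move b a i = spin_move a b i by apply/idP/idP; exact: spin_move_sym.
  by case ab: (spin_move a b i); rewrite ?mulr0 // (weight_spin_move ab).
have -> : edge_move b a i = edge_move a b i by apply/idP/idP; exact: edge_move_sym.
rewrite mulrCA [RHS]mulrCA; case ab: (edge_move a b i); rewrite ?mul0r //.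
by rewrite !mul1r (weight_edge_move ab).
Qed.

Lemma IP_gen_sum0 b : \sum_a IP src tgt p a * gen src tgt p a b = 0.
Proof.
under eq_bigr do rewrite /IP mulrAC.
rewrite -mulr_suml (bigD1 b) //= /gen eqxx.
under eq_bigr => a /negbTE -> do rewrite weight_rate_sym.
by rewrite -mulr_sumr mulrN addNr mul0r.
Qed.

Lemma law_at_IP s b : law_at src tgt p s b = IP src tgt p b.
Proof. exact: expm_stationary IP_gen_sum0 s b. Qed.

End Reversibility.

Section ClusterFlip.
Variables (V E : finType) (src tgt : E -> V) (p : R) (eta : econf E) (e : E).
Local Notation weight := (IPweight src tgt p).

Lemma weight_eq0_of_disagree sg f :
  eta f -> ~~ delta src tgt sg f -> weight (eta, sg) = 0.
Proof.
move=> eta_f /negbTE disagree.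
by rewrite /IPweight (bigD1 f) //= eta_f disagree mulr0 mul0r.
Qed.

Lemma delta_of_gamma sg :
  gamma src tgt eta e -> weight (eta, sg) != 0 -> delta src tgt sg e.
Proof.
move=> gamma_e weight_neq0.
have agree f : eta f -> sg (src f) = sg (tgt f).
  move=> eta_f; apply/eqP; apply: contraNT weight_neq0 => disagree.
  by rewrite (weight_eq0_of_disagree eta_f disagree).
have closed_sg : closed_mem (open_adj src tgt eta e) (mem [pred y | sg y == sg (src e)]).
  move=> x y /existsP[f /and3P[_ /agree sg_f ends_f]]; rewrite !inE.
  by case/orP: ends_f => /andP[/eqP <- /eqP <-]; rewrite sg_f.
by have := closed_connect closed_sg gamma_e; rewrite !inE eqxx eq_sym => /esym.
Qed.

Definition cluster (y : V) : bool := connect (open_adj src tgt eta e) (src e) y.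

Definition flip_cluster (sg : sconf V) : sconf V :=
  [ffun y => if cluster y then ~~ sg y else sg y].

Lemma flip_cluster_involutive : involutive flip_cluster.
Proof.
by move=> sg; apply/ffunP => y; rewrite !ffunE; case: (cluster y); rewrite ?negbK.
Qed.

Lemma cluster_open_edge f : f != e -> eta f -> cluster (src f) = cluster (tgt f).
Proof.
move=> f_neq_e eta_f.
have fwd : open_adj src tgt eta e (src f) (tgt f).
  by apply/existsP; exists f; rewrite f_neq_e eta_f !eqxx.
have bwd : open_adj src tgt eta e (tgt f) (src f).
  by apply/existsP; exists f; rewrite f_neq_e eta_f !eqxx orbT.
by apply/idP/idP => /connect_trans; apply; apply: connect1.
Qed.

Lemma weight_flip_cluster sg : ~~ eta e -> weight (eta, flip_cluster sg) = weight (eta, sg).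
Proof.
move=> closed_e; apply: eq_bigr => f _ /=; case eta_f: (eta f) => //.
have f_neq_e : f != e by apply: contraNneq closed_e => <-.
rewrite /delta !ffunE (cluster_open_edge f_neq_e eta_f).
by case: (cluster (tgt f)); rewrite // eqb_negLR negbK.
Qed.

Lemma delta_flip_cluster sg : ~~ gamma src tgt eta e ->
  delta src tgt (flip_cluster sg) e = ~~ delta src tgt sg e.
Proof.
move=> not_gamma; rewrite /delta !ffunE.
have -> : cluster (src e) by exact: connect0.
have -> : cluster (tgt e) = false by exact: negbTE.
by case: (sg (src e)); case: (sg (tgt e)).
Qed.

End ClusterFlip.

Section EdgeFlip.
Variables (V E : finType) (src tgt : E -> V) (p : R) (eta : econf E) (e : E).
Local Notation IPe sg := (IP src tgt p (eta, sg)).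

Lemma gen_edge_flip sg sg' :
  gen src tgt p (eta, sg) (flipE eta e, sg')
  = (sg == sg')%:R * edge_rate src tgt p (eta, sg) e.
Proof.
have eta_neq := negbTE (flipE_neq_self eta e).
rewrite /gen xpair_eqE eta_neq /= rateE [X in X + _]big1 ?add0r => [|x _]; last first.
  by rewrite /spin_move /= eta_neq.
rewrite (bigD1 e) //= big1 ?addr0 => [|f f_neq_e].
  by rewrite /edge_move /= eqxx andbT.
by rewrite /edge_move /= eq_flipE [e == f]eq_sym (negbTE f_neq_e) andbF mul0r.
Qed.

Lemma sum_gen_edge_flip sg :
  \sum_sg' gen src tgt p (eta, sg) (flipE eta e, sg') = edge_rate src tgt p (eta, sg) e.
Proof.
under eq_bigr do rewrite gen_edge_flip.
rewrite (bigD1 sg) //= eqxx mul1r big1 ?addr0 // => sg' /negbTE.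
by rewrite eq_sym => ->; rewrite mul0r.
Qed.

Lemma sum_IP_delta_half : ~~ eta e -> ~~ gamma src tgt eta e ->
  2 * \sum_sg IPe sg * (delta src tgt sg e)%:R = \sum_sg IPe sg.
Proof.
move=> closed_e not_gamma.
have IP_flip sg : IPe (flip_cluster src tgt eta e sg) = IPe sg.
  by rewrite /IP weight_flip_cluster.
have flip_inj := inv_inj (flip_cluster_involutive src tgt eta e).
rewrite mulr2n mulrDl mul1r [X in X + _](reindex_inj flip_inj) /=.
rewrite -big_split /=; apply: eq_bigr => sg _.
rewrite IP_flip delta_flip_cluster //.
by case: (delta src tgt sg e); rewrite /= ?mulr0 ?mulr1 ?addr0 ?add0r.
Qed.

Lemma sum_IP_edge_rate : \sum_sg IPe sg * edge_rate src tgt p (eta, sg) e =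
  ((1 - p) * (eta e)%:R
   + p * ((~~ eta e) && gamma src tgt eta e)%:R
   + p / 2 * ((~~ eta e) && ~~ gamma src tgt eta e)%:R) * \sum_sg IPe sg.
Proof.
rewrite /edge_rate /=; have [eta_e|closed_e] := boolP (eta e).
  by rewrite mulr_sumr; apply: eq_bigr => sg _; rewrite /= mulr0n mulr1n; ring.
have [gamma_e|not_gamma] := boolP (gamma src tgt eta e).
  rewrite mulr_sumr; apply: eq_bigr => sg _.
  have [->|IP_neq0] := eqVneq (IPe sg) 0; first by ring.
  have weight_neq0 : IPweight src tgt p (eta, sg) != 0.
    by apply: contraNneq IP_neq0; rewrite /IP RdivE => ->; rewrite mul0r.
  by rewrite (delta_of_gamma gamma_e weight_neq0) /=; ring.
rewrite -(sum_IP_delta_half closed_e not_gamma) !mulr_sumr.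
by apply: eq_bigr => sg _; rewrite /= mulr0n mulr1n; field.
Qed.

End EdgeFlip.

Lemma trans_rate (V E : finType) (src tgt : E -> V) (p : R) (a b : state V E) : a != b ->
  (fun t => trans src tgt p t a b / t) @ 0^'+ --> gen src tgt p a b.
Proof.
move=> a_neq_b; have := @expm_rate V E (gen src tgt p) a b.
by rewrite /mid (negbTE a_neq_b); under eq_fun do rewrite subr0.
Qed.

Theorem proposition3 (V E : finType) (src tgt : E -> V)
  (no_loop : forall e, src e != tgt e)
  (no_multi : forall e f, (src e = src f /\ tgt e = tgt f) \/ (src e = tgt f /\ tgt e = src f) -> e = f)
  (p : R) (p_ge0 : 0 <= p) (p_le1 : p <= 1)
  (e : E) (eta : {ffun E -> bool}) (s : R) (s_ge0 : 0 <= s)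
  (cond_pos : 0 < prob_eta src tgt p s eta) :
  (fun t : R => cond_prob src tgt p s t eta (flipE eta e) / t) @ 0^'+ -->
    ((1 - p) * (eta e)%:R
     + p * ((~~ eta e) && gamma src tgt eta e)%:R
     + p / 2 * ((~~ eta e) && ~~ gamma src tgt eta e)%:R).
Proof.
set IPeta := fun sg => IP src tgt p (eta, sg).
set M := \sum_sg IPeta sg.
have prob_etaE : prob_eta src tgt p s eta = M by apply: eq_bigr => sg _; rewrite law_at_IP.
have M_neq0 : M != 0 by rewrite -prob_etaE gt_eqF.
suff : (fun t => cond_prob src tgt p s t eta (flipE eta e) / t) @ 0^'+ -->
    (\sum_sg IPeta sg * edge_rate src tgt p (eta, sg) e) / M.
  by rewrite sum_IP_edge_rate mulfK.
have -> : (fun t => cond_prob src tgt p s t eta (flipE eta e) / t) = fun t =>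
    (\sum_sg \sum_sg' IPeta sg * (trans src tgt p t (eta, sg) (flipE eta e, sg') / t)) / M.
  apply/funext => t; rewrite /cond_prob /prob_eta2 prob_etaE RdivE mulrAC.
  congr (_ / M); rewrite mulr_suml; apply: eq_bigr => sg _.
  by rewrite mulr_suml; apply: eq_bigr => sg' _; rewrite law_at_IP mulrA.
apply: cvgMr_tmp; apply: cvg_sumr => // sg.
rewrite -sum_gen_edge_flip mulr_sumr; apply: cvg_sumr => // sg'.
apply: cvgMl_tmp; apply: trans_rate.
by rewrite xpair_eqE negb_and flipE_neq_self.
Qed.
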